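(* Let $\mathcal{H},\mathcal{K}$ be complex Hilbert spaces and $(f_*,f^* ):(\mathsf{P}(\mathcal{H}),\mathsf{L}(\mathcal{H}),\bar e_{\mathcal{H}})\to(\mathsf{P}(\mathcal{K}),\mathsf{L}(\mathcal{K}),\bar e_{\mathcal{K}})$ a Chu morphism with $f_*$ injective. Then for all nonzero $\phi,\psi\in\mathcal{H}$: $\phi\perp\psi$ if and only if the rays $f_*([\phi])$ and $f_*([\psi])$ are orthogonal.
   Context: A Chu morphism $(X,A,e)\to(X',A',e')$ between Chu spaces over $[0,1]$ is a pair $(f_*:X\to X',f^*:A'\to A)$ with $e(x,f^*(a'))=e'(f_*(x),a')$ for all $x\in X,a'\in A'$. For a complex Hilbert space $\mathcal{H}$: $\mathsf{L}(\mathcal{H})$ is the set of closed subspaces, $P_S$ the orthogonal projector onto $S$, $\mathsf{P}(\mathcal{H})$ the set of rays $[\psi]=\{\lambda\psi:\lambda\in\mathbb{C}\}$, $\psi\ne0$, and $\bar e_{\mathcal{H}}([\psi],S)=\|P_S\psi\|^2/\|\psi\|^2$. *)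

From HB Require Import structures.
From mathcomp Require Import all_boot all_order all_algebra.
From mathcomp Require Import boolp classical_sets reals.
From mathcomp Require Import complex.
Set Implicit Arguments. Unset Strict Implicit. Unset Printing Implicit Defensive.
Import Order.TTheory GRing.Theory Num.Theory.
Local Open Scope ring_scope.
Local Open Scope classical_set_scope.

Section Hilbert.
Variables (R : realType) (H : lmodType R[i]) (ip : H -> H -> R[i]).

Definition hnorm (x : H) : R := Num.sqrt (complex.Re (ip x x)).

Definition converges_to (u : nat -> H) (x : H) : Prop :=
  forall eps : R, 0 < eps -> exists N : nat, forall n, (N <= n)%N -> hnorm (u n - x) < eps.

Definition cauchy_seq (u : nat -> H) : Prop :=
  forall eps : R, 0 < eps -> exists N : nat,
    forall m n, (N <= m)%N -> (N <= n)%N -> hnorm (u m - u n) < eps.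

Record is_hilbert : Prop := {
  ip_linear : forall (a : R[i]) (x y z : H), ip (a *: x + y) z = a * ip x z + ip y z;
  ip_conj_sym : forall x y : H, ip y x = conjc (ip x y);
  ip_pos : forall x : H, 0 <= ip x x;
  ip_definite : forall x : H, ip x x = 0 -> x = 0;
  ip_complete : forall u : nat -> H, cauchy_seq u -> exists x, converges_to u x }.

Definition closed_subspace (S : set H) : Prop :=
  [/\ S 0,
      (forall x y, S x -> S y -> S (x + y)),
      (forall (a : R[i]) x, S x -> S (a *: x)) &
      (forall (u : nat -> H) x, (forall n, S (u n)) -> converges_to u x -> S x)].

Definition Lsub := {S : set H | closed_subspace S}.

Definition proj (S : set H) (x : H) : H :=
  xget 0 [set p | S p /\ forall s, S s -> ip (x - p) s = 0].

Definition ray_set (psi : H) : set H := [set a *: psi | a in [set: R[i]]].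

Definition Ray := {r : set H | exists psi : H, psi != 0 /\ r = ray_set psi}.

Definition mkray (psi : H) (h : psi != 0) : Ray :=
  exist (fun r => exists psi, psi != 0 /\ r = ray_set psi) (ray_set psi)
        (ex_intro _ psi (conj h erefl)).

Definition ray_rep (r : Ray) : H := projT1 (cid (proj2_sig r)).

Definition ebar (r : Ray) (S : Lsub) : R :=
  hnorm (proj (proj1_sig S) (ray_rep r)) ^+ 2 / hnorm (ray_rep r) ^+ 2.

Definition ray_orth (r1 r2 : Ray) : Prop :=
  forall u v, proj1_sig r1 u -> proj1_sig r2 v -> ip u v = 0.

End Hilbert.

(* Chu morphisms between Chu spaces over [0,1] (valued in R) *)
Definition chu_morphism (R : realType) (X A X' A' : Type)
  (e : X -> A -> R) (e' : X' -> A' -> R) (fl : X -> X') (fu : A' -> A) : Prop :=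
  forall (x : X) (a' : A'), e x (fu a') = e' (fl x) a'.

From HB Require Import structures.
From mathcomp Require Import all_boot all_order all_algebra.
From mathcomp Require Import boolp classical_sets reals.
From mathcomp Require Import complex.
Import Order.TTheory GRing.Theory Num.Theory.
Set Implicit Arguments. Unset Strict Implicit.
Local Open Scope ring_scope.
Local Open Scope classical_set_scope.

(* Let [w] represent [f_*([psi])] and pull the line through [w] back to the
   closed subspace [A = f^*(line w)].  A nonzero [a] in [A] has [ebar([a], A) = 1],
   hence [ebar(f_*([a]), line w) = 1], which forces [f_*([a]) = f_*([psi])] and, by
   injectivity, [a] is on the line through [psi]; conversely [A] is nonzero since
   [ebar([psi], A) = ebar(f_*([psi]), line w) = 1].  So [A] is the line through
   [psi], [ebar([phi], A) = 0] says [phi ⊥ psi], [ebar(f_*([phi]), line w) = 0]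
   says [f_*([phi]) ⊥ f_*([psi])], and the Chu condition identifies the two. *)

Lemma proj1_sig_inj (T : Type) (P : T -> Prop) (x y : {t | P t}) :
  proj1_sig x = proj1_sig y -> x = y.
Proof. by case: x; case: y => /= ? ? ? ? xy; apply: eq_exist. Qed.

Section Rays.
Variables (R : realType) (H : lmodType R[i]).

Lemma ray_rep_neq0 (r : Ray H) : ray_rep r != 0.
Proof. by have [] := projT2 (cid (proj2_sig r)). Qed.

Lemma ray_setE (r : Ray H) : proj1_sig r = ray_set (ray_rep r).
Proof. by have [] := projT2 (cid (proj2_sig r)). Qed.

Lemma mem_ray_set (v : H) : ray_set v v.
Proof. by exists 1; rewrite ?scale1r. Qed.

Lemma mem_ray_rep (r : Ray H) : proj1_sig r (ray_rep r).
Proof. by rewrite ray_setE; exact: mem_ray_set. Qed.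

Lemma ray_set_scale (v : H) c : c != 0 -> ray_set (c *: v) = ray_set v.
Proof.
move=> c0; apply/seteqP; split => _ [a _ <-].
  by exists (a * c); rewrite ?scalerA.
by exists (a / c); rewrite ?scalerA ?divfK.
Qed.

Lemma ray_eq_mem (r r' : Ray H) : proj1_sig r' (ray_rep r) -> r = r'.
Proof.
rewrite ray_setE => -[c _ cv]; apply: proj1_sig_inj; rewrite !ray_setE -cv.
rewrite ray_set_scale //; apply: contraNneq (ray_rep_neq0 r) => c0.
by rewrite -cv c0 scale0r.
Qed.

Lemma ray_rep_mkray (psi : H) (psi0 : psi != 0) :
  exists2 c, c != 0 & ray_rep (mkray psi0) = c *: psi.
Proof.
have [c _ cpsi] : ray_set psi (ray_rep (mkray psi0)) := mem_ray_rep (mkray psi0).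
exists c => //; apply: contraNneq (ray_rep_neq0 (mkray psi0)) => c0.
by rewrite -cpsi c0 scale0r.
Qed.

End Rays.

Section InnerProduct.
Variables (R : realType) (H : lmodType R[i]) (ip : H -> H -> R[i]).
Hypothesis hH : is_hilbert ip.

Lemma ipDl x y z : ip (x + y) z = ip x z + ip y z.
Proof. by rewrite -[x in LHS]scale1r (ip_linear hH) mul1r. Qed.

Lemma ip0l z : ip 0 z = 0.
Proof. by apply: (addrI (ip 0 z)); rewrite addr0 -ipDl addr0. Qed.

Lemma ipZl a x z : ip (a *: x) z = a * ip x z.
Proof. by rewrite -[a *: x]addr0 (ip_linear hH) ip0l addr0. Qed.

Lemma ipBl x y z : ip (x - y) z = ip x z - ip y z.
Proof. by rewrite ipDl -scaleN1r ipZl mulN1r. Qed.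

Lemma ipDr x y z : ip x (y + z) = ip x y + ip x z.
Proof. by rewrite !(ip_conj_sym hH _ x) ipDl; apply: rmorphD. Qed.

Lemma ipZr a x y : ip x (a *: y) = conjc a * ip x y.
Proof. by rewrite !(ip_conj_sym hH _ x) ipZl; apply: rmorphM. Qed.

Lemma ip_orth_sym x y : ip x y = 0 -> ip y x = 0.
Proof. by move=> xy; rewrite (ip_conj_sym hH) xy rmorph0. Qed.

Lemma ipxx_neq0 x : x != 0 -> ip x x != 0.
Proof. by apply: contra => /eqP /(ip_definite hH) ->. Qed.

Lemma Re_ipxx_ge0 x : 0 <= complex.Re (ip x x).
Proof. by have := ip_pos hH x; rewrite lecE => /andP[]. Qed.

Lemma Re_ipxx_eq0 x : complex.Re (ip x x) = 0 -> x = 0.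
Proof.
move=> Re0; apply: (ip_definite hH); have := ip_pos hH x.
by rewrite lecE => /andP[/eqP]; case: (ip x x) Re0 => a b /= -> ->.
Qed.

Lemma hnorm_sqr x : hnorm ip x ^+ 2 = complex.Re (ip x x).
Proof. by rewrite sqr_sqrtr // Re_ipxx_ge0. Qed.

Lemma hnorm_sqr_eq0 x : (hnorm ip x ^+ 2 == 0) = (x == 0).
Proof.
apply/eqP/eqP => [|->]; first by rewrite hnorm_sqr => /Re_ipxx_eq0.
by rewrite hnorm_sqr ip0l.
Qed.

Lemma pythagoras x y : ip x y = 0 ->
  complex.Re (ip (x + y) (x + y)) = complex.Re (ip x x) + complex.Re (ip y y).
Proof.
move=> xy; rewrite ipDl !ipDr xy (ip_orth_sym xy) addr0 add0r.
by case: (ip x x); case: (ip y y).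
Qed.

Lemma proj_eq (S : set H) x p : closed_subspace ip S ->
  S p -> (forall s, S s -> ip (x - p) s = 0) -> proj ip S x = p.
Proof.
case=> _ SD SZ _ Sp xp_orth; apply: xget_unique => // q [Sq xq_orth].
have Sqp : S (q - p) by rewrite -scaleN1r; apply: SD (SZ _ _ Sp).
apply/eqP; rewrite -subr_eq0; apply/eqP/(ip_definite hH).
have qpE : q - p = (x - p) - (x - q) by rewrite opprB [RHS]addrC addrA subrK.
by rewrite {1}qpE ipBl xp_orth // xq_orth // subrr.
Qed.

Lemma proj_mem (S : set H) x : proj ip S x != 0 -> S (proj ip S x).
Proof. by rewrite /proj; case: xgetP => [y _ [Sy _] _ | _] //; rewrite eqxx. Qed.

Lemma sub_ray_set (S : set H) w : closed_subspace ip S -> S w -> ray_set w `<=` S.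
Proof. by case=> _ _ SZ _ Sw _ [a _ <-]; exact: SZ. Qed.

Lemma ray_set_closed w : w != 0 -> closed_subspace ip (ray_set w).
Proof.
move=> w0; split.
- by exists 0; rewrite ?scale0r.
- by move=> _ _ [a _ <-] [b _ <-]; exists (a + b); rewrite ?scalerDl.
- by move=> c _ [a _ <-]; exists (c * a); rewrite ?scalerA.
move=> u x u_line u_cvg; set c := ip x w / ip w w; set z := c *: w - x.
have zw : ip z w = 0 by rewrite ipBl ipZl divfK ?subrr ?ipxx_neq0.
suff /eqP : z = 0 by rewrite subr_eq0 eq_sym => /eqP ->; exists c.
(* each [u n - x] is [z] plus a vector of the line, so [||u n - x|| >= ||z||] *)
apply: Re_ipxx_eq0; apply/eqP; rewrite eq_le Re_ipxx_ge0 andbT leNgt.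
apply/negP => z_gt0.
have [N uN] : exists N, forall n, (N <= n)%N -> hnorm ip (u n - x) < hnorm ip z.
  by apply: u_cvg; rewrite sqrtr_gt0.
have [a _ ua] := u_line N; move: (uN N (leqnn N)).
have -> : u N - x = (a - c) *: w + z by rewrite -ua scalerBl addrA subrK.
have orth : ip ((a - c) *: w) z = 0 by rewrite ipZl (ip_orth_sym zw) mulr0.
by rewrite /hnorm ltr_sqrt // (pythagoras orth) gtrDr ltNge Re_ipxx_ge0.
Qed.

Lemma proj_ray_set w x : w != 0 -> proj ip (ray_set w) x = (ip x w / ip w w) *: w.
Proof.
move=> w0; apply: proj_eq; [exact: ray_set_closed | by exists (ip x w / ip w w)|].
by move=> _ [a _ <-]; rewrite ipZr ipBl ipZl divfK ?subrr ?mulr0 ?ipxx_neq0.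
Qed.

Definition line_Lsub w (w0 : w != 0) : Lsub ip := exist _ _ (ray_set_closed w0).

Lemma ebar_line_eq0 w (w0 : w != 0) r :
  ebar r (line_Lsub w0) = 0 <-> ip (ray_rep r) w = 0.
Proof.
have v0 := ray_rep_neq0 r.
rewrite /ebar /= proj_ray_set //; split => [/eqP|->]; last first.
  by rewrite mul0r scale0r expr2 /hnorm ip0l sqrtr0 !mul0r.
rewrite mulf_eq0 invr_eq0 !hnorm_sqr_eq0 (negbTE v0) orbF scaler_eq0.
by rewrite (negbTE w0) orbF mulf_eq0 invr_eq0 (negbTE (ipxx_neq0 w0)) orbF => /eqP.
Qed.

Lemma ebar_line_eq1 w (w0 : w != 0) r :
  ebar r (line_Lsub w0) = 1 -> ray_set w (ray_rep r).
Proof.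
have v0 := ray_rep_neq0 r.
rewrite /ebar /= proj_ray_set //; set v := ray_rep r; set c := ip v w / ip w w => e1.
have norm_eq : hnorm ip (c *: w) ^+ 2 = hnorm ip v ^+ 2.
  by rewrite -[RHS]mul1r -e1 divfK // hnorm_sqr_eq0.
have orth : ip (c *: w) (v - c *: w) = 0.
  have vw : ip (v - c *: w) w = 0 by rewrite ipBl ipZl /c divfK ?subrr ?ipxx_neq0.
  by rewrite ipZl (ip_orth_sym vw) mulr0.
(* by Pythagoras the component [v - c w] orthogonal to the line has norm 0 *)
have := pythagoras orth; rewrite addrC subrK -!hnorm_sqr norm_eq => /eqP.
rewrite addrC -subr_eq subrr eq_sym hnorm_sqr_eq0 subr_eq0 => /eqP ->.
by exists c.
Qed.

Lemma ebar_mem (S : Lsub ip) r : proj1_sig S (ray_rep r) -> ebar r S = 1.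
Proof.
move=> Sv; rewrite /ebar (proj_eq (proj2_sig S) Sv) => [|s _].
  by rewrite divff // hnorm_sqr_eq0 ray_rep_neq0.
by rewrite subrr ip0l.
Qed.

Lemma ebar_neq0_mem (S : Lsub ip) r :
  ebar r S != 0 -> exists2 p, proj1_sig S p & p != 0.
Proof.
move=> e0; have p0 : proj ip (proj1_sig S) (ray_rep r) != 0.
  by apply: contraNneq e0 => p0; rewrite /ebar p0 expr2 /hnorm ip0l sqrtr0 !mul0r.
by exists (proj ip (proj1_sig S) (ray_rep r)); first exact: proj_mem.
Qed.

Lemma ip_ray_rep_mkray psi (psi0 : psi != 0) w :
  ip (ray_rep (mkray psi0)) w = 0 <-> ip psi w = 0.
Proof.
have [c c0 ->] := ray_rep_mkray psi0; rewrite ipZl //.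
by split => [/eqP|->]; rewrite ?mulr0 // mulf_eq0 (negbTE c0) => /eqP.
Qed.

Lemma ray_orthE (r1 r2 : Ray H) :
  ray_orth ip r1 r2 <-> ip (ray_rep r1) (ray_rep r2) = 0.
Proof.
split => [|orth u v]; first by apply; exact: mem_ray_rep.
by rewrite !ray_setE => -[a _ <-] [b _ <-]; rewrite ipZl ipZr orth !mulr0.
Qed.

End InnerProduct.

Theorem proposition3p7 (R : realType)
  (H : lmodType R[i]) (ipH : H -> H -> R[i]) (hH : is_hilbert ipH)
  (K : lmodType R[i]) (ipK : K -> K -> R[i]) (hK : is_hilbert ipK)
  (fl : Ray H -> Ray K) (fu : Lsub ipK -> Lsub ipH)
  (hchu : chu_morphism (@ebar R H ipH) (@ebar R K ipK) fl fu)
  (hinj : injective fl) :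
  forall (phi psi : H) (hphi : phi != 0) (hpsi : psi != 0),
    ipH phi psi = 0 <-> ray_orth ipK (fl (mkray hphi)) (fl (mkray hpsi)).
Proof.
move=> phi psi hphi hpsi.
pose T := line_Lsub hK (ray_rep_neq0 (fl (mkray hpsi))).
have A_sub : proj1_sig (fu T) `<=` ray_set psi.
  move=> a Aa; have [->|a0] := eqVneq a 0; first by exists 0; rewrite ?scale0r.
  have : ebar (fl (mkray a0)) T = 1.
    rewrite -hchu; apply: (ebar_mem hH).
    exact: (sub_ray_set (proj2_sig (fu T)) Aa) _ (mem_ray_rep (mkray a0)).
  move=> /ebar_line_eq1; rewrite -ray_setE => /ray_eq_mem/hinj.
  by move=> /(congr1 (@proj1_sig _ _)) /= <-; exact: mem_ray_set.
have A_psi : proj1_sig (fu T) psi.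
  have : ebar (mkray hpsi) (fu T) != 0.
    by rewrite hchu (ebar_mem hK) ?oner_eq0 //; exact: mem_ray_set.
  move=> /(ebar_neq0_mem hH) [p Ap p0]; have [d _ dpsi] := A_sub _ Ap.
  have d0 : d != 0 by apply: contraNneq p0 => d0; rewrite -dpsi d0 scale0r.
  have [_ _ AZ _] := proj2_sig (fu T).
  by rewrite -[psi](scalerK d0) dpsi; apply: AZ.
have A_line : fu T = line_Lsub hH hpsi.
  apply: proj1_sig_inj; apply/seteqP; split => //.
  exact: sub_ray_set (proj2_sig (fu T)) A_psi.
rewrite (ray_orthE hK) -(ebar_line_eq0 hK (ray_rep_neq0 _)) -hchu A_line.
rewrite (ebar_line_eq0 hH); exact: iff_sym (ip_ray_rep_mkray hH hphi psi).
Qed.
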